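(* Let $(\alpha_n,\beta_n)_{n\ge1}$ be integers with $12\sum_{k<n}\beta_k<\alpha_n\le\beta_n$ for every $n$ and $\sum_i\frac{\log\beta_i}{3^i}<\infty$. Then for all sufficiently small $\varepsilon>0$, a $B_\varepsilon$-random subset of $\mathbb{Z}^2$ is bi-sparse (with respect to $(\alpha_n,\beta_n)$) with probability $1$.
   Context: Distances on $\mathbb{Z}^2$ are $\ell_\infty$; diameters and $\beta$-neighborhoods are taken with respect to this distance. For $E\subset\mathbb{Z}^2$ and integers $\beta\ge\alpha>0$, a nonempty $X\subset E$ is an $(\alpha,\beta)$-bi-island in $E$ if $X=X_0\cup X_1$ for some sets $X_0,X_1$ such that: the $\beta$-neighborhood of $X$ contains no point of $E\setminus X$; $X_0$ and $X_1$ have diameter at most $\alpha$; and the distance between $X_0$ and $X_1$ is at most $\beta$ (one of them may be empty). Given $(\alpha_i,\beta_i)$, the cleaning process sets $E_0=E$ and obtains $E_i$ from $E_{i-1}$ by removing all $(\alpha_i,\beta_i)$-bi-islands of $E_{i-1}$ (rank $i$ bi-islands); a point is affected at step $i$ if it lies in the $\beta_i$-neighborhood of some rank $i$ bi-island. $E$ is bi-sparse if every point of $E$ is removed at some step and every point of $\mathbb{Z}^2$ is affected at only finitely many steps. $B_\varepsilon$ is the Bernoulli distribution on subsets of $\mathbb{Z}^2$: each point belongs to the set independently with probability $\varepsilon$. *)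

(* subsets of Z^2 as predicates, Bernoulli product measure
   null sets via Caratheodory outer measure on cylinder sets. *)
From Stdlib Require Import Reals ZArith List.
Open Scope R_scope.

Definition pt := (Z * Z)%type.
Definition subset := pt -> Prop.

Definition dist (p q : pt) : Z :=
  Z.max (Z.abs (fst p - fst q)) (Z.abs (snd p - snd q)).

Definition diam_le (X : subset) (a : Z) : Prop :=
  forall x y, X x -> X y -> (dist x y <= a)%Z.

(* distance between X0 and X1 at most b; vacuous if one of them is empty *)
Definition setdist_le (X0 X1 : subset) (b : Z) : Prop :=
  (exists x, X0 x) -> (exists y, X1 y) ->
  exists x y, X0 x /\ X1 y /\ (dist x y <= b)%Z.

Definition bi_island (a b : Z) (E X : subset) : Prop :=
  (exists x, X x) /\
  (forall x, X x -> E x) /\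
  (forall x y, X x -> E y -> ~ X y -> (b < dist x y)%Z) /\
  exists X0 X1 : subset,
    (forall x, X x <-> X0 x \/ X1 x) /\
    diam_le X0 a /\ diam_le X1 a /\ setdist_le X0 X1 b.

(* cleaning process: clean alpha beta E i = E_i (steps indexed from 1) *)
Fixpoint clean (alpha beta : nat -> Z) (E : subset) (i : nat) : subset :=
  match i with
  | O => E
  | S j => fun p => clean alpha beta E j p /\
       ~ (exists X, bi_island (alpha (S j)) (beta (S j)) (clean alpha beta E j) X /\ X p)
  end.

Definition affected (alpha beta : nat -> Z) (E : subset) (i : nat) (p : pt) : Prop :=
  exists X, bi_island (alpha i) (beta i) (clean alpha beta E (i - 1)) X /\
            exists x, X x /\ (dist p x <= beta i)%Z.

Definition bi_sparse (alpha beta : nat -> Z) (E : subset) : Prop :=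
  (forall p, E p -> exists i, (1 <= i)%nat /\
       clean alpha beta E (i - 1) p /\ ~ clean alpha beta E i p) /\
  (forall p, exists N, forall i, (N < i)%nat -> ~ affected alpha beta E i p).

(* cylinder sets: finite lists of (point, membership) with distinct points *)
Definition cylinder := list (pt * bool).

Definition cyl_wf (c : cylinder) : Prop := NoDup (map fst c).

Definition in_cyl (c : cylinder) (E : subset) : Prop :=
  forall p b, In (p, b) c -> (E p <-> b = true).

Fixpoint cyl_prob (eps : R) (c : cylinder) : R :=
  match c with
  | nil => 1
  | (_, b) :: c' => (if b then eps else 1 - eps) * cyl_prob eps c'
  end.

(* S is B_eps-null: outer measure (countable covers by cylinders) is 0 *)
Definition B_null (eps : R) (S : subset -> Prop) : Prop :=
  forall delta, 0 < delta ->
    exists C : nat -> cylinder,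
      (forall n, cyl_wf (C n)) /\
      (forall E, S E -> exists n, in_cyl (C n) E) /\
      (forall N, sum_f_R0 (fun n => cyl_prob eps (C n)) N <= delta).

(* sum_{1 <= k < n} beta k *)
Fixpoint sum_before (beta : nat -> Z) (n : nat) : Z :=
  match n with
  | O => 0%Z
  | S m => match m with O => 0%Z | _ => (sum_before beta m + beta m)%Z end
  end.

(* If [E] is not bi-sparse, then some point [p] has, for infinitely many [n],
   a point [y] within [beta (n+1)] of [p] surviving [n] cleaning steps.  A
   surviving point lies in no bi-island, so it has two companions in [E],
   far from it and from each other, that survived one step less
   ([unisolated_triple]; this needs [alpha] to dominate the earlier scales).
   Iterating, [y] is the root of a "witness": a ternary tree of [3^n] distinct
   points of [E] near [y].  The number of witnesses of depth [n] at a given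
   root is at most [M^(3^(n-1))], where [M] is finite by the summability of
   [ln beta_i / 3^i].  A witness has probability [eps^(3^n)], so for
   [18 M eps <= 1] the witnesses of depth [T+k] rooted near the box of
   radius [k] around the origin have total probability at most
   [2 (M eps)^T / 2^k]; summing over [k] and letting [T] grow shows that the
   non-bi-sparse sets are [B_eps]-null. *)

From Pilot Require Import Defs.
From Stdlib Require Import Reals ZArith List Lia Lra Classical.
(* [Defs.dist] must shadow the metric-space [dist] of the real library. *)
Import Defs.
Open Scope R_scope.

(** * Geometry of the l-infinity distance and bi-islands *)

Section Geometry.
Local Open Scope Z_scope.

Lemma dist_triangle x y z : dist x z <= dist x y + dist y z.
Proof. destruct x, y, z; unfold dist; simpl; lia. Qed.

Lemma dist_sym x y : dist x y = dist y x.
Proof. destruct x, y; unfold dist; simpl; lia. Qed.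

Lemma dist_nonneg x y : 0 <= dist x y.
Proof. destruct x, y; unfold dist; simpl; lia. Qed.

Lemma dist_refl x : dist x x = 0.
Proof. destruct x; unfold dist; simpl; lia. Qed.

Definition ball (E : subset) (c : pt) (r : Z) : subset :=
  fun p => E p /\ dist c p <= r.

Lemma outside_ball E c r p : E p -> ~ ball E c r p -> r < dist c p.
Proof.
  intros Ep Hp. destruct (Z_lt_le_dec r (dist c p)) as [H | H]; [exact H|].
  exfalso. now apply Hp.
Qed.

Lemma ball_diam E c r a : 2 * r <= a -> diam_le (ball E c r) a.
Proof.
  intros Ha p q [_ Hp] [_ Hq].
  pose proof (dist_triangle p c q). rewrite (dist_sym p c) in *. lia.
Qed.

Lemma bi_island_union (a b : Z) (E X0 X1 : subset) :
  (exists x, X0 x) ->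
  (forall x, X0 x \/ X1 x -> E x) ->
  (forall x y, X0 x \/ X1 x -> E y -> ~ (X0 y \/ X1 y) -> b < dist x y) ->
  diam_le X0 a -> diam_le X1 a -> setdist_le X0 X1 b ->
  bi_island a b E (fun p => X0 p \/ X1 p).
Proof.
  intros [x Hx] HE Hiso H0 H1 H01.
  split; [exists x; now left|].
  split; [exact HE|]. split; [exact Hiso|].
  exists X0, X1. split; [tauto|]. auto.
Qed.

Lemma isolated_or_escape (b : Z) (E X : subset) :
  (forall x y, X x -> E y -> ~ X y -> b < dist x y) \/
  (exists u q, X u /\ E q /\ ~ X q /\ dist u q <= b).
Proof.
  destruct (classic (exists u q, X u /\ E q /\ ~ X q /\ dist u q <= b))
    as [Hesc | Hesc]; [now right | left].
  intros x y Hx Ey Hy.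
  destruct (Z_lt_le_dec b (dist x y)) as [Hlt | Hle]; [exact Hlt|].
  exfalso. apply Hesc. now exists x, y.
Qed.

Lemma unisolated_escape (a b r : Z) (E X1 : subset) (x : pt) :
  0 <= r -> 2 * r <= a -> E x ->
  ~ (exists X, bi_island a b E X /\ X x) ->
  (forall p, X1 p -> E p) -> diam_le X1 a -> setdist_le (ball E x r) X1 b ->
  exists u q, (ball E x r u \/ X1 u) /\ E q /\ ~ (ball E x r q \/ X1 q) /\ dist u q <= b.
Proof.
  intros Hr Ha Ex Hx HX1 Hdiam Hclose.
  destruct (isolated_or_escape b E (fun p => ball E x r p \/ X1 p)) as [Hiso | Hesc];
    [exfalso | exact Hesc].
  apply Hx. exists (fun p => ball E x r p \/ X1 p).
  split; [|left; split; [exact Ex | rewrite dist_refl; lia]].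
  apply bi_island_union; auto.
  - exists x. split; [exact Ex | rewrite dist_refl; lia].
  - intros p [[Ep _] | Hp]; auto.
  - now apply ball_diam.
Qed.

(* They escape from the ball
   around [x], and then from the union of the balls around [x] and [y]. *)
Lemma unisolated_triple (a b r : Z) (E : subset) (x : pt) :
  0 <= r -> 2 * r <= a -> E x ->
  ~ (exists X, bi_island a b E X /\ X x) ->
  exists y z, E y /\ E z /\
    r < dist x y /\ r < dist y z /\ r < dist x z /\
    dist x y <= r + b /\ dist x z <= 2 * r + 2 * b.
Proof.
  intros Hr Ha Ex Hx.
  destruct (unisolated_escape a b r E (fun _ => False) x Hr Ha Ex Hx)
    as (u & y & Hu & Ey & Hy & Huy); [tauto | intros p q [] | intros _ [? []] |].
  destruct Hu as [[Eu Hu] | []].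
  assert (Hxy : r < dist x y) by (apply (outside_ball E); tauto).
  destruct (unisolated_escape a b r E (ball E y r) x Hr Ha Ex Hx)
    as (v & z & Hv & Ez & Hz & Hvz).
  { now intros p [Ep _]. }
  { now apply ball_diam. }
  { intros _ _. exists u, y. split; [now split|].
    split; [split; [exact Ey | rewrite dist_refl; lia] | exact Huy]. }
  exists y, z. split; [exact Ey|]. split; [exact Ez|].
  assert (Hxz : r < dist x z) by (apply (outside_ball E); tauto).
  assert (Hyz : r < dist y z) by (apply (outside_ball E); tauto).
  pose proof (dist_triangle x u y). pose proof (dist_triangle x v z).
  repeat split; try assumption; [lia|].
  destruct Hv as [[_ Hv] | [_ Hv]]; [lia|].
  pose proof (dist_triangle x y v). lia.
Qed.

End Geometry.

Section Boxes.
Local Open Scope Z_scope.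

Definition box_side (r : Z) : nat := Z.to_nat (2 * r + 1).

Definition box (c : pt) (r : Z) : list pt :=
  flat_map (fun i => map (fun j => (fst c - r + Z.of_nat i, snd c - r + Z.of_nat j))
                         (seq 0 (box_side r)))
           (seq 0 (box_side r)).

Lemma box_length c r : length (box c r) = (box_side r * box_side r)%nat.
Proof.
  unfold box. rewrite (flat_map_constant_length (c := box_side r)).
  - now rewrite length_seq.
  - intros; now rewrite length_map, length_seq.
Qed.

Lemma box_complete c p r : 0 <= r -> dist c p <= r -> In p (box c r).
Proof.
  intros Hr Hd. destruct c as [c1 c2], p as [p1 p2]. unfold dist in Hd; simpl in Hd.
  apply in_flat_map. exists (Z.to_nat (p1 - c1 + r)). split.
  - apply in_seq. unfold box_side. lia.
  - apply in_map_iff. exists (Z.to_nat (p2 - c2 + r)). split.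
    + simpl. f_equal; lia.
    + apply in_seq. unfold box_side. lia.
Qed.

Lemma box_sound c p r : In p (box c r) -> dist c p <= r.
Proof.
  destruct c as [c1 c2]. intros H. apply in_flat_map in H as [i [Hi H]].
  apply in_map_iff in H as [j [<- Hj]]. apply in_seq in Hi, Hj.
  unfold box_side in *. unfold dist; simpl. lia.
Qed.

End Boxes.

Lemma length_flat_map_le {X Y : Type} (f : X -> list Y) (l : list X) (k : nat) :
  (forall a, In a l -> length (f a) <= k)%nat ->
  (length (flat_map f l) <= length l * k)%nat.
Proof.
  induction l as [|a l IH]; simpl; intros H; [lia|]. rewrite length_app.
  pose proof (H a (or_introl eq_refl)).
  pose proof (IH (fun b Hb => H b (or_intror Hb))). lia.
Qed.

(** * Witness trees

   A point surviving [n] cleaning steps is certified by a ternary tree of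
   depth [n] whose [3^n] leaves are points of [E]: at each level the root [x]
   has two companions [y], [z] (given by [unisolated_triple]) and the tree is
   the concatenation of three subtrees rooted at [x], [y], [z].  We enumerate
   all such leaf configurations as lists of points; their number depends only
   on the scales [be], not on [E]. *)

Section WitnessTrees.
Local Open Scope Z_scope.
Variable be : nat -> Z.

(* All leaves of a witness of depth [n] lie within [radius n] of its root. *)
Fixpoint radius (n : nat) : Z :=
  match n with O => 0 | S m => 5 * radius m + 2 * be (S m) end.

Definition separated (n : nat) (p q : pt) : bool := 2 * radius n <? dist p q.

Definition triples (A B C : list (list pt)) : list (list pt) :=
  flat_map (fun a => flat_map (fun b => map (fun c => a ++ b ++ c) C) B) A.

Fixpoint witnesses (n : nat) (x : pt) : list (list pt) :=
  match n with
  | O => (x :: nil) :: nil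
  | S m =>
      flat_map (fun y => flat_map (fun z =>
        if ((separated m x y && separated m y z) && separated m x z)%bool
        then triples (witnesses m x) (witnesses m y) (witnesses m z) else nil)
        (box x (4 * radius m + 2 * be (S m))))
      (box x (2 * radius m + be (S m)))
  end.

Fixpoint witness_count (n : nat) : nat :=
  match n with
  | O => 1
  | S m =>
      box_side (2 * radius m + be (S m)) * box_side (2 * radius m + be (S m)) *
      (box_side (4 * radius m + 2 * be (S m)) * box_side (4 * radius m + 2 * be (S m))) *
      (witness_count m * witness_count m * witness_count m)
  end.

Lemma in_triples A B C l :
  In l (triples A B C) <-> exists a b c, In a A /\ In b B /\ In c C /\ l = a ++ b ++ c.
Proof.
  unfold triples. split.
  - intros H. apply in_flat_map in H as [a [Ha H]].
    apply in_flat_map in H as [b [Hb H]]. apply in_map_iff in H as [c [Hc H]].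
    now exists a, b, c.
  - intros (a & b & c & Ha & Hb & Hc & ->).
    apply in_flat_map. exists a. split; [exact Ha|].
    apply in_flat_map. exists b. split; [exact Hb|].
    apply in_map_iff. now exists c.
Qed.

Lemma in_witnesses_S n x l :
  In l (witnesses (S n) x) <->
  exists y z a b c,
    In y (box x (2 * radius n + be (S n))) /\
    In z (box x (4 * radius n + 2 * be (S n))) /\
    2 * radius n < dist x y /\ 2 * radius n < dist y z /\ 2 * radius n < dist x z /\
    In a (witnesses n x) /\ In b (witnesses n y) /\ In c (witnesses n z) /\
    l = a ++ b ++ c.
Proof.
  cbn [witnesses]. rewrite in_flat_map. split.
  - intros [y [Hy Hl]]. apply in_flat_map in Hl as [z [Hz Hl]]. unfold separated in Hl.
    destruct (2 * radius n <? dist x y) eqn:E1; [|destruct Hl].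
    destruct (2 * radius n <? dist y z) eqn:E2; [|destruct Hl].
    destruct (2 * radius n <? dist x z) eqn:E3; [|destruct Hl].
    apply in_triples in Hl as (a & b & c & Ha & Hb & Hc & ->).
    apply Z.ltb_lt in E1, E2, E3.
    exists y, z, a, b, c. repeat split; assumption.
  - intros (y & z & a & b & c & Hy & Hz & D1 & D2 & D3 & Ha & Hb & Hc & ->).
    exists y. split; [exact Hy|]. apply in_flat_map. exists z. split; [exact Hz|].
    unfold separated. apply Z.ltb_lt in D1, D2, D3. rewrite D1, D2, D3.
    apply in_triples. now exists a, b, c.
Qed.

Lemma witnesses_length n x : (length (witnesses n x) <= witness_count n)%nat.
Proof.
  revert x; induction n as [|n IH]; intros x; [simpl; lia|]. cbn [witnesses witness_count].
  set (g := witness_count n).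
  assert (Htriples : forall A B C, (length A <= g)%nat -> (length B <= g)%nat ->
            (length C <= g)%nat -> (length (triples A B C) <= g * g * g)%nat).
  { intros A B C HA HB HC. unfold triples.
    eapply Nat.le_trans; [apply (length_flat_map_le _ _ (g * g))|].
    - intros a _. eapply Nat.le_trans; [apply (length_flat_map_le _ _ g)|].
      + intros b _. now rewrite length_map.
      + now apply Nat.mul_le_mono_r.
    - rewrite <- Nat.mul_assoc. now apply Nat.mul_le_mono_r. }
  eapply Nat.le_trans; [apply length_flat_map_le with
    (k := (box_side (4 * radius n + 2 * be (S n)) * box_side (4 * radius n + 2 * be (S n))
           * (g * g * g))%nat)|].
  - intros y _. eapply Nat.le_trans; [apply length_flat_map_le with (k := (g * g * g)%nat)|].
    + intros z _. destruct (andb _ _); simpl; [apply Htriples; apply IH | lia].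
    + rewrite box_length. lia.
  - rewrite box_length. lia.
Qed.

Lemma witness_size n x l : In l (witnesses n x) -> length l = (3 ^ n)%nat.
Proof.
  revert x l; induction n as [|n IH]; intros x l.
  - intros [<- | []]. reflexivity.
  - intros Hl. apply in_witnesses_S in Hl as (y & z & a & b & c & _ & _ & _ & _ & _ & Ha & Hb & Hc & ->).
    rewrite !length_app, (IH _ _ Ha), (IH _ _ Hb), (IH _ _ Hc). simpl. lia.
Qed.

Hypothesis be_nonneg : forall k, (1 <= k)%nat -> 0 <= be k.

Lemma radius_nonneg n : 0 <= radius n.
Proof. induction n; cbn [radius]; [lia|]. pose proof (be_nonneg (S n) ltac:(lia)). lia. Qed.

Lemma witness_near_root n x l p : In l (witnesses n x) -> In p l -> dist x p <= radius n.
Proof.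
  revert x l p; induction n as [|n IH]; intros x l p.
  - intros [<- | []] [<- | []]. rewrite dist_refl. simpl; lia.
  - intros Hl Hp. cbn [radius].
    apply in_witnesses_S in Hl as (y & z & a & b & c & Hy & Hz & _ & _ & _ & Ha & Hb & Hc & ->).
    apply box_sound in Hy, Hz.
    pose proof (radius_nonneg n). pose proof (be_nonneg (S n) ltac:(lia)).
    apply in_app_or in Hp as [Hp | Hp]; [pose proof (IH _ _ _ Ha Hp); lia|].
    apply in_app_or in Hp as [Hp | Hp].
    + pose proof (IH _ _ _ Hb Hp). pose proof (dist_triangle x y p). lia.
    + pose proof (IH _ _ _ Hc Hp). pose proof (dist_triangle x z p). lia.
Qed.

(* The three subtrees are far apart, so the leaves of a witness are distinct. *)
Lemma witness_nodup n x l : In l (witnesses n x) -> NoDup l.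
Proof.
  revert x l; induction n as [|n IH]; intros x l.
  - intros [<- | []]. constructor; [intros [] | constructor].
  - intros Hl.
    apply in_witnesses_S in Hl as (y & z & a & b & c & _ & _ & Dxy & Dyz & Dxz & Ha & Hb & Hc & ->).
    assert (Hapart : forall u v l1 l2 p, 2 * radius n < dist u v ->
              In l1 (witnesses n u) -> In l2 (witnesses n v) -> In p l1 -> ~ In p l2).
    { intros u v l1 l2 p D H1 H2 P1 P2.
      pose proof (witness_near_root _ _ _ _ H1 P1). pose proof (witness_near_root _ _ _ _ H2 P2).
      pose proof (dist_triangle u p v). rewrite (dist_sym p v) in *. lia. }
    apply NoDup_app; [eauto | apply NoDup_app; [eauto | eauto |] |].
    + intros p Hp. exact (Hapart _ _ _ _ p Dyz Hb Hc Hp).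
    + intros p Hp Hq. apply in_app_or in Hq as [Hq | Hq].
      * exact (Hapart _ _ _ _ p Dxy Ha Hb Hp Hq).
      * exact (Hapart _ _ _ _ p Dxz Ha Hc Hp Hq).
Qed.

Variable al : nat -> Z.
Hypothesis al_large : forall m, 4 * radius m <= al (S m).

Lemma survivor_witness E n x :
  clean al be E n x -> exists l, In l (witnesses n x) /\ forall p, In p l -> E p.
Proof.
  revert x; induction n as [|n IH]; intros x Hx.
  - exists (x :: nil). split; [now left|]. intros p [<- | []]. exact Hx.
  - destruct Hx as [Hx Hisl].
    pose proof (radius_nonneg n). pose proof (be_nonneg (S n) ltac:(lia)).
    destruct (unisolated_triple (al (S n)) (be (S n)) (2 * radius n) (clean al be E n) x
                ltac:(lia) ltac:(specialize (al_large n); lia) Hx Hisl)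
      as (y & z & Ey & Ez & Dxy & Dyz & Dxz & Hy & Hz).
    destruct (IH x Hx) as [a [Ha Ea]], (IH y Ey) as [b [Hb Eb]], (IH z Ez) as [c [Hc Ec]].
    exists (a ++ b ++ c). split.
    + apply in_witnesses_S. exists y, z, a, b, c.
      repeat split; try assumption; apply box_complete; lia.
    + intros p Hp. apply in_app_or in Hp as [Hp | Hp]; auto.
      apply in_app_or in Hp as [Hp | Hp]; auto.
Qed.

End WitnessTrees.

(** If [E] is not bi-sparse, some point [p] is either never removed or
   affected infinitely often; in both cases, for arbitrarily large [n] a
   point surviving [n] cleaning steps lies within [be (n+1)] of [p]. *)

Lemma not_bi_sparse_survivors (al be : nat -> Z) (E : subset) :
  (forall k, (1 <= k)%nat -> (0 <= be k)%Z) ->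
  ~ bi_sparse al be E ->
  exists p, forall N, exists n, (N <= n)%nat /\
    exists y, (dist p y <= be (S n))%Z /\ clean al be E n y.
Proof.
  intros Hbe H. unfold bi_sparse in H. apply not_and_or in H as [H | H].
  - apply not_all_ex_not in H as [p H]. apply imply_to_and in H as [Ep Hnever].
    assert (Hsurv : forall n, clean al be E n p).
    { induction n as [|n IH]; [exact Ep|].
      apply NNPP. intros Hout. apply Hnever. exists (S n).
      replace (S n - 1)%nat with n by lia. split; [lia | now split]. }
    exists p. intros N. exists N. split; [lia|]. exists p.
    rewrite dist_refl. split; [apply Hbe; lia | apply Hsurv].
  - apply not_all_ex_not in H as [p H]. exists p. intros N.
    apply NNPP. intros HN. apply H. exists N. intros i Hi Ha.
    apply HN. exists (i - 1)%nat. split; [lia|].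
    destruct Ha as [X [[_ [Hsub _]] [x [Xx Dx]]]].
    exists x. replace (S (i - 1)) with i by lia. auto.
Qed.

Section Scales.
Local Open Scope Z_scope.
Variables alpha beta : nat -> Z.
Hypothesis scales : forall n, (1 <= n)%nat ->
  12 * sum_before beta n < alpha n /\ alpha n <= beta n.

Lemma sum_before_nonneg n : 0 <= sum_before beta (S n).
Proof.
  induction n as [|n IH]; [simpl; lia|].
  change (sum_before beta (S (S n))) with (sum_before beta (S n) + beta (S n)).
  destruct (scales (S n) ltac:(lia)). lia.
Qed.

Lemma beta_pos k : (1 <= k)%nat -> 1 <= beta k.
Proof.
  intros Hk. destruct k as [|k]; [lia|].
  destruct (scales (S k) Hk). pose proof (sum_before_nonneg k). lia.
Qed.

Lemma radius_le_sum_before m : radius beta m <= 3 * sum_before beta (S m).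
Proof.
  induction m as [|m IH]; [simpl; lia|].
  change (sum_before beta (S (S m))) with (sum_before beta (S m) + beta (S m)).
  cbn [radius]. destruct (scales (S m) ltac:(lia)). pose proof (sum_before_nonneg m). lia.
Qed.

Lemma alpha_dominates_radius m : 4 * radius beta m <= alpha (S m).
Proof.
  destruct (scales (S m) ltac:(lia)).
  pose proof (radius_le_sum_before m). pose proof (sum_before_nonneg m). lia.
Qed.

Lemma beta_dominates_radius m : 8 * radius beta m + 1 <= 3 * beta (S m).
Proof.
  destruct (scales (S m) ltac:(lia)).
  pose proof (radius_le_sum_before m). pose proof (sum_before_nonneg m). lia.
Qed.

End Scales.

(** * Counting witnesses

   [witness_count (m+1) <= (7 be(m+1))^4 * witness_count m ^ 3], hence
   [witness_count n <= exp (3^n * log_growth n)] where [log_growth] is a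
   partial sum of [4 ln (7 be(i)) / 3^i]; the summability hypothesis keeps
   [log_growth] bounded. *)

Lemma exp_le_compat x y : x <= y -> exp x <= exp y.
Proof.
  intros [Hlt | ->]; [left; now apply exp_increasing | now right].
Qed.

Lemma exp_mult_nat (k : nat) (y : R) : exp (INR k * y) = exp y ^ k.
Proof.
  rewrite <- Rpower_pow by apply exp_pos. unfold Rpower. now rewrite ln_exp, Rmult_comm.
Qed.

Lemma ln_nonneg x : 1 <= x -> 0 <= ln x.
Proof.
  intros [H1 | <-]; [|rewrite ln_1; lra].
  rewrite <- ln_1. left. apply ln_increasing; lra.
Qed.

Section WitnessCount.
Variable be : nat -> Z.
Hypothesis be_pos : forall k, (1 <= k)%nat -> (1 <= be k)%Z.
Hypothesis be_dominates : forall m, (8 * radius be m + 1 <= 3 * be (S m))%Z.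

Fixpoint log_growth (n : nat) : R :=
  match n with
  | O => 0
  | S m => log_growth m + 4 * ln (7 * IZR (be (S m))) / 3 ^ (S m)
  end.

Lemma be_nonneg k : (1 <= k)%nat -> (0 <= be k)%Z.
Proof. intros Hk. specialize (be_pos k Hk). lia. Qed.

Lemma INR_box_side r : (0 <= r)%Z -> INR (box_side r) = IZR (2 * r + 1).
Proof. intros. unfold box_side. rewrite INR_IZR_INZ. f_equal. lia. Qed.

Lemma witness_count_step m :
  INR (witness_count be (S m)) <=
  (7 * IZR (be (S m))) ^ 4 * INR (witness_count be m) ^ 3.
Proof.
  pose proof (radius_nonneg be be_nonneg m) as HR.
  pose proof (be_pos (S m) ltac:(lia)). pose proof (be_dominates m).
  set (b := 7 * IZR (be (S m))).
  assert (Hside : forall r, (0 <= r <= 4 * radius be m + 2 * be (S m))%Z ->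
            0 <= INR (box_side r) <= b).
  { intros r Hr. split; [apply pos_INR|]. rewrite INR_box_side by lia. unfold b.
    rewrite <- mult_IZR. apply IZR_le. lia. }
  cbn [witness_count]. rewrite !mult_INR.
  set (s1 := INR (box_side (2 * radius be m + be (S m)))).
  set (s2 := INR (box_side (4 * radius be m + 2 * be (S m)))).
  destruct (Hside (2 * radius be m + be (S m))%Z ltac:(lia)) as [Hs1 Hs1'].
  destruct (Hside (4 * radius be m + 2 * be (S m))%Z ltac:(lia)) as [Hs2 Hs2'].
  fold s1 in Hs1, Hs1'. fold s2 in Hs2, Hs2'.
  set (g := INR (witness_count be m)).
  assert (Hg : 0 <= g) by apply pos_INR.
  assert (Hsq1 : s1 * s1 <= b * b) by (apply Rmult_le_compat; lra).
  assert (Hsq2 : s2 * s2 <= b * b) by (apply Rmult_le_compat; lra).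
  assert (Hfour : s1 * s1 * (s2 * s2) <= b ^ 4).
  { replace (b ^ 4) with (b * b * (b * b)) by ring.
    apply Rmult_le_compat; try apply Rmult_le_pos; lra. }
  replace (g ^ 3) with (g * g * g) by ring.
  apply Rmult_le_compat_r; [apply Rmult_le_pos; [apply Rmult_le_pos|]|]; lra.
Qed.

Lemma witness_count_exp n : INR (witness_count be n) <= exp (3 ^ n * log_growth n).
Proof.
  induction n as [|n IH].
  - simpl. rewrite Rmult_0_r, exp_0. lra.
  - eapply Rle_trans; [apply witness_count_step|].
    assert (Hb : 1 <= IZR (be (S n))) by (apply IZR_le; apply be_pos; lia).
    set (b := 7 * IZR (be (S n))).
    assert (Hcube : INR (witness_count be n) ^ 3 <= exp (3 ^ n * log_growth n) ^ 3).
    { apply pow_incr. split; [apply pos_INR | exact IH]. }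
    assert (Hb4 : b ^ 4 = exp (INR 4 * ln b)).
    { rewrite exp_mult_nat, exp_ln; unfold b; [reflexivity | lra]. }
    rewrite <- exp_mult_nat in Hcube.
    eapply Rle_trans; [apply Rmult_le_compat_l; [apply pow_le; unfold b; lra | exact Hcube]|].
    rewrite Hb4, <- exp_plus. right. f_equal. cbn [log_growth]. fold b.
    assert (0 < 3 ^ n) by (apply pow_lt; lra). simpl. field. lra.
Qed.

Definition log_sum (n : nat) : R :=
  match n with O => 0 | S m => sum_f_R0 (fun i => ln (IZR (be (S i))) / 3 ^ (S i)) m end.

Lemma log_growth_eq n : log_growth n = 2 * ln 7 * (1 - (/3) ^ n) + 4 * log_sum n.
Proof.
  induction n as [|n IH]; [simpl; ring|].
  assert (Hsum : log_sum (S n) = log_sum n + ln (IZR (be (S n))) / 3 ^ (S n))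
    by (destruct n; simpl; [ring | reflexivity]).
  cbn [log_growth]. rewrite IH, Hsum.
  assert (H1 : 1 <= IZR (be (S n))) by (apply IZR_le; apply be_pos; lia).
  rewrite ln_mult by lra. rewrite !pow_inv.
  assert (0 < 3 ^ n) by (apply pow_lt; lra). simpl. field. lra.
Qed.

Lemma log_growth_bound l n :
  Un_cv (fun N => sum_f_R0 (fun i => ln (IZR (be (S i))) / 3 ^ (S i)) N) l ->
  log_growth n <= 2 * ln 7 + 4 * Rabs l.
Proof.
  intros Hl. rewrite log_growth_eq.
  assert (Hterm : forall i, 0 <= ln (IZR (be (S i))) / 3 ^ (S i)).
  { intros i. apply Rmult_le_pos.
    - apply ln_nonneg, IZR_le, be_pos; lia.
    - left. apply Rinv_0_lt_compat, pow_lt; lra. }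
  assert (Hs : log_sum n <= Rabs l).
  { destruct n; simpl log_sum; [apply Rabs_pos|].
    eapply Rle_trans; [|apply RRle_abs]. apply growing_ineq; [|exact Hl].
    intros m. pose proof (Hterm (S m)) as Ht. simpl in Ht |- *. lra. }
  assert (0 <= ln 7) by (apply ln_nonneg; lra).
  assert (0 <= (/3) ^ n) by (apply pow_le; lra). nra.
Qed.

Lemma witness_count_geometric l n :
  Un_cv (fun N => sum_f_R0 (fun i => ln (IZR (be (S i))) / 3 ^ (S i)) N) l ->
  INR (witness_count be (S n)) <= exp (3 * (2 * ln 7 + 4 * Rabs l)) ^ (3 ^ n).
Proof.
  intros Hl. eapply Rle_trans; [apply witness_count_exp|].
  rewrite <- exp_mult_nat. apply exp_le_compat.
  rewrite pow_INR. replace (INR 3) with 3 by (simpl; ring).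
  pose proof (log_growth_bound l (S n) Hl). assert (0 < 3 ^ n) by (apply pow_lt; lra).
  replace (3 ^ S n) with (3 * 3 ^ n) by reflexivity. nra.
Qed.

End WitnessCount.

(** * Countable covers by cylinders

   It is more convenient to produce the cover as a sequence of
   finite nonempty blocks; [cover_of_blocks] enumerates such blocks as a
   single sequence without changing the partial sums. *)

Definition total_prob (eps : R) (cs : list cylinder) : R :=
  fold_right Rplus 0 (map (cyl_prob eps) cs).

Lemma cyl_prob_nonneg eps c : 0 <= eps <= 1 -> 0 <= cyl_prob eps c.
Proof.
  intros He. induction c as [|[p b] c IH]; simpl; [lra|].
  destruct b; apply Rmult_le_pos; lra.
Qed.

Lemma total_prob_app eps a b : total_prob eps (a ++ b) = total_prob eps a + total_prob eps b.
Proof. induction a as [|c a IH]; unfold total_prob in *; simpl; [ring|]. rewrite IH. ring. Qed.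

Lemma total_prob_const eps cs v :
  (forall c, In c cs -> cyl_prob eps c = v) -> total_prob eps cs = INR (length cs) * v.
Proof.
  induction cs as [|c cs IH]; intros H; unfold total_prob in *; [simpl; ring|].
  cbn [map fold_right length].
  rewrite (H c (or_introl eq_refl)), (IH (fun d Hd => H d (or_intror Hd))), S_INR. ring.
Qed.

Lemma partial_sum_le_total eps (w : list cylinder) N :
  0 <= eps <= 1 -> (N < length w)%nat ->
  sum_f_R0 (fun n => cyl_prob eps (nth n w nil)) N <= total_prob eps w.
Proof.
  intros He. revert N; induction w as [|c w IH]; intros N HN; simpl in HN; [lia|].
  assert (Hw : 0 <= total_prob eps w).
  { clear IH HN. induction w as [|d w IHw]; unfold total_prob in *; simpl; [lra|].
    pose proof (cyl_prob_nonneg eps d He). lra. }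
  unfold total_prob in *. destruct N as [|N]; [simpl; lra|].
  rewrite decomp_sum by lia. simpl. specialize (IH N ltac:(lia)). lra.
Qed.

Section Enumeration.
Variable blocks : nat -> list cylinder.
Hypothesis blocks_nonempty : forall k, blocks k <> nil.

Definition prefix (N : nat) : list cylinder := concat (map blocks (seq 0 (S N))).

(* The [n]-th cylinder of the enumeration; [prefix n] has more than [n] terms. *)
Definition enum (n : nat) : cylinder := nth n (prefix n) nil.

Lemma prefix_S N : prefix (S N) = prefix N ++ blocks (S N).
Proof.
  unfold prefix. rewrite (seq_S (S N)), map_app, concat_app. cbn [map concat].
  now rewrite app_nil_r.
Qed.

Lemma prefix_length N : (N < length (prefix N))%nat.
Proof.
  induction N as [|N IH].
  - unfold prefix. simpl. rewrite app_nil_r.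
    destruct (blocks 0) eqn:E; [now destruct (blocks_nonempty 0) | simpl; lia].
  - rewrite prefix_S, length_app.
    destruct (blocks (S N)) eqn:E; [now destruct (blocks_nonempty (S N)) | simpl; lia].
Qed.

Lemma prefix_extends a b : (a <= b)%nat -> exists r, prefix b = prefix a ++ r.
Proof.
  induction 1 as [|b _ [r Hr]]; [exists nil; now rewrite app_nil_r|].
  exists (r ++ blocks (S b)). now rewrite prefix_S, Hr, app_assoc.
Qed.

Lemma enum_nth N j : (j < length (prefix N))%nat -> enum j = nth j (prefix N) nil.
Proof.
  intros Hj. unfold enum. destruct (Nat.le_ge_cases j N) as [HjN | HjN].
  - destruct (prefix_extends j N HjN) as [r ->]. symmetry. apply app_nth1, prefix_length.
  - destruct (prefix_extends N j HjN) as [r ->]. now apply app_nth1.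
Qed.

Lemma enum_in_blocks n : exists k, In (enum n) (blocks k).
Proof.
  unfold enum. pose proof (nth_In _ nil (prefix_length n)) as H.
  unfold prefix at 2 in H. apply in_concat in H as [b [Hb Hc]].
  apply in_map_iff in Hb as [k [<- _]]. eauto.
Qed.

Lemma enum_onto k c : In c (blocks k) -> exists j, enum j = c.
Proof.
  intros H.
  assert (Hk : In c (prefix k)).
  { apply in_concat. exists (blocks k). split; [apply in_map, in_seq; lia | exact H]. }
  apply (In_nth _ _ nil) in Hk as [j [Hj Hn]]. exists j. now rewrite (enum_nth k j Hj).
Qed.

Lemma total_prob_prefix eps N :
  total_prob eps (prefix N) = sum_f_R0 (fun k => total_prob eps (blocks k)) N.
Proof.
  induction N as [|N IH].
  - unfold prefix. simpl. now rewrite app_nil_r.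
  - now rewrite prefix_S, total_prob_app, IH.
Qed.

Lemma enum_partial_sum eps N : 0 <= eps <= 1 ->
  sum_f_R0 (fun n => cyl_prob eps (enum n)) N <=
  sum_f_R0 (fun k => total_prob eps (blocks k)) N.
Proof.
  intros He. pose proof (prefix_length N).
  rewrite (sum_eq _ (fun n => cyl_prob eps (nth n (prefix N) nil))).
  - rewrite <- total_prob_prefix. now apply partial_sum_le_total.
  - intros n Hn. rewrite (enum_nth N n); [reflexivity | lia].
Qed.

End Enumeration.

Lemma cover_of_blocks (eps : R) (P : subset -> Prop) (blocks : nat -> list cylinder)
    (delta : R) :
  0 <= eps <= 1 ->
  (forall k, blocks k <> nil) ->
  (forall k c, In c (blocks k) -> cyl_wf c) ->
  (forall E, P E -> exists k c, In c (blocks k) /\ in_cyl c E) ->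
  (forall N, sum_f_R0 (fun k => total_prob eps (blocks k)) N <= delta) ->
  exists C : nat -> cylinder,
    (forall n, cyl_wf (C n)) /\
    (forall E, P E -> exists n, in_cyl (C n) E) /\
    (forall N, sum_f_R0 (fun n => cyl_prob eps (C n)) N <= delta).
Proof.
  intros He Hne Hwf Hcov Hsum. exists (enum blocks). split; [|split].
  - intros n. destruct (enum_in_blocks blocks Hne n) as [k Hk]. eauto.
  - intros E HE. destruct (Hcov E HE) as (k & c & Hc & HEc).
    destruct (enum_onto blocks Hne k c Hc) as [j Hj]. exists j. now rewrite Hj.
  - intros N. eapply Rle_trans; [apply enum_partial_sum; assumption | apply Hsum].
Qed.

(** * Covering the sets that are not bi-sparse *)

Definition positive_cylinder (l : list pt) : cylinder := map (fun p => (p, true)) l.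

Lemma positive_cylinder_wf l : NoDup l -> cyl_wf (positive_cylinder l).
Proof. unfold cyl_wf, positive_cylinder. rewrite map_map. simpl. now rewrite map_id. Qed.

Lemma positive_cylinder_in l E : (forall p, In p l -> E p) -> in_cyl (positive_cylinder l) E.
Proof.
  unfold in_cyl, positive_cylinder. intros H p b Hp.
  apply in_map_iff in Hp as [q [Hq Hin]]. inversion Hq; subst. split; auto.
Qed.

Lemma positive_cylinder_prob eps l : cyl_prob eps (positive_cylinder l) = eps ^ length l.
Proof. induction l as [|p l IH]; simpl; [reflexivity | now rewrite IH]. Qed.

(* [m] distinct points, used to make every block of the cover nonempty. *)
Definition filler (m : nat) : list pt := map (fun j => (Z.of_nat j, 0%Z)) (seq 0 m).

Lemma filler_nodup m : NoDup (filler m).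
Proof.
  apply NoDup_map_NoDup_ForallPairs; [|apply seq_NoDup].
  intros a b _ _ H. inversion H. lia.
Qed.

Lemma filler_length m : length (filler m) = m.
Proof. unfold filler. now rewrite length_map, length_seq. Qed.

Lemma odd_square_le_pow9 k : ((2 * k + 1) * (2 * k + 1) <= 9 ^ k)%nat.
Proof. induction k; simpl; nia. Qed.

Lemma pow_antitone th m n : 0 <= th <= 1 -> (m <= n)%nat -> th ^ n <= th ^ m.
Proof.
  intros Hth Hmn. replace n with (m + (n - m))%nat by lia. rewrite pow_add.
  assert (0 <= th ^ m) by (apply pow_le; lra).
  assert (th ^ (n - m) <= 1) by (rewrite <- (pow1 (n - m)); apply pow_incr; lra).
  nra.
Qed.

Section Blocks.
Local Open Scope Z_scope.
Variable be : nat -> Z.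
Hypothesis be_nonneg : forall k, (1 <= k)%nat -> 0 <= be k.
Variable T : nat.

Definition block (k : nat) : list cylinder :=
  positive_cylinder (filler (3 ^ (T + k))) ::
  flat_map (fun p => flat_map (fun y => map positive_cylinder (witnesses be (T + k) y))
                              (box p (be (S (T + k)))))
           (box (0, 0) (Z.of_nat k)).

Lemma block_members k c : In c (block k) ->
  exists l, c = positive_cylinder l /\ length l = (3 ^ (T + k))%nat /\ NoDup l.
Proof.
  intros [<- | H].
  - exists (filler (3 ^ (T + k))). split; [reflexivity|].
    split; [apply filler_length | apply filler_nodup].
  - apply in_flat_map in H as [p [_ H]]. apply in_flat_map in H as [y [_ H]].
    apply in_map_iff in H as [l [<- Hl]]. exists l. split; [reflexivity|].
    split; [eapply witness_size | eapply witness_nodup]; eauto.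
Qed.

Lemma witness_count_absorbs_box n :
  (box_side (be (S n)) * box_side (be (S n)) * witness_count be n <=
   witness_count be (S n))%nat.
Proof.
  pose proof (radius_nonneg be be_nonneg n). pose proof (be_nonneg (S n) ltac:(lia)).
  cbn [witness_count].
  set (b := box_side (be (S n))). set (b1 := box_side (2 * radius be n + be (S n))).
  set (b2 := box_side (4 * radius be n + 2 * be (S n))). set (g := witness_count be n).
  assert (b <= b1)%nat by (unfold b, b1, box_side; lia).
  assert (1 <= b2)%nat by (unfold b2, box_side; lia).
  apply Nat.le_trans with (b1 * b1 * (g * g * g))%nat.
  - apply Nat.mul_le_mono; [apply Nat.mul_le_mono; lia | nia].
  - replace (b1 * b1 * (b2 * b2) * (g * g * g))%nat
      with (b2 * b2 * (b1 * b1 * (g * g * g)))%nat by ring.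
    rewrite <- (Nat.mul_1_l (b1 * b1 * (g * g * g))) at 1.
    apply Nat.mul_le_mono_r. nia.
Qed.

Lemma block_length k : (length (block k) <= 9 ^ k * witness_count be (S (T + k)) + 1)%nat.
Proof.
  set (n := (T + k)%nat). unfold block. cbn [length]. fold n.
  assert (Hbody : (length (flat_map (fun p => flat_map (fun y =>
              map positive_cylinder (witnesses be n y)) (box p (be (S n))))
              (box (0%Z, 0%Z) (Z.of_nat k))) <=
           (2 * k + 1) * (2 * k + 1) *
           (box_side (be (S n)) * box_side (be (S n)) * witness_count be n))%nat).
  { eapply Nat.le_trans; [apply length_flat_map_le with
      (k := (box_side (be (S n)) * box_side (be (S n)) * witness_count be n)%nat)|].
    - intros p _. rewrite <- (box_length p). apply length_flat_map_le.
      intros y _. rewrite length_map. apply witnesses_length.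
    - rewrite box_length. unfold box_side at 1 2.
      replace (Z.to_nat (2 * Z.of_nat k + 1)) with (2 * k + 1)%nat by lia. lia. }
  pose proof (odd_square_le_pow9 k). pose proof (witness_count_absorbs_box n).
  enough ((2 * k + 1) * (2 * k + 1) *
          (box_side (be (S n)) * box_side (be (S n)) * witness_count be n) <=
          9 ^ k * witness_count be (S n))%nat by lia.
  now apply Nat.mul_le_mono.
Qed.

Variable al : nat -> Z.
Hypothesis al_large : forall m, 4 * radius be m <= al (S m).

Lemma not_bi_sparse_covered E : ~ bi_sparse al be E ->
  exists k c, In c (block k) /\ in_cyl c E.
Proof.
  intros HE. destruct (not_bi_sparse_survivors al be E be_nonneg HE) as [p Hp].
  destruct (Hp (T + Z.to_nat (dist (0%Z, 0%Z) p))%nat) as (n & Hn & y & Hy & Cy).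
  set (k := (n - T)%nat). replace n with (T + k)%nat in * by lia.
  destruct (survivor_witness be be_nonneg al al_large E _ y Cy) as (l & Hl & HlE).
  exists k, (positive_cylinder l). split; [|now apply positive_cylinder_in].
  right. apply in_flat_map. exists p. split.
  - apply box_complete; [lia|]. pose proof (dist_nonneg (0, 0) p). lia.
  - apply in_flat_map. exists y. split.
    + apply box_complete; [apply be_nonneg; lia | exact Hy].
    + now apply in_map.
Qed.

End Blocks.

Section BlockWeights.
Variable be : nat -> Z.
Hypothesis be_nonneg : forall k, (1 <= k)%nat -> (0 <= be k)%Z.
Variable T : nat.
Variables eps M : R.
Hypothesis count_bound : forall n, INR (witness_count be (S n)) <= M ^ (3 ^ n).
Hypothesis M_ge_1 : 1 <= M.
Hypothesis eps_pos : 0 < eps.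
Hypothesis eps_small : 18 * (M * eps) <= 1.

Lemma block_total k : total_prob eps (block be T k) <= 2 * (M * eps) ^ T * (/ 2) ^ k.
Proof.
  set (n := (T + k)%nat). set (th := M * eps).
  assert (Hth : 0 <= th <= 1) by (unfold th; nra).
  rewrite (total_prob_const _ _ (eps ^ (3 ^ n))).
  2:{ intros c Hc. apply (block_members be be_nonneg) in Hc as (l & -> & Hl & _).
      now rewrite positive_cylinder_prob, Hl. }
  assert (Hlen : INR (length (block be T k)) <= 9 ^ k * M ^ (3 ^ n) + 1).
  { eapply Rle_trans; [apply le_INR, (block_length be be_nonneg)|].
    rewrite plus_INR, mult_INR, pow_INR, INR_1. replace (INR 9) with 9 by (simpl; ring).
    apply Rplus_le_compat_r, Rmult_le_compat_l; [apply pow_le; lra | apply count_bound]. }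
  assert (H9 : 1 <= 9 ^ k) by (apply pow_R1_Rle; lra).
  assert (He : 0 <= eps ^ (3 ^ n)) by (apply pow_le; lra).
  assert (Hdom : eps ^ (3 ^ n) <= th ^ (3 ^ n)) by (apply pow_incr; unfold th; nra).
  assert (Hmul : M ^ (3 ^ n) * eps ^ (3 ^ n) = th ^ (3 ^ n))
    by (unfold th; symmetry; apply Rpow_mult_distr).
  assert (Hweight : INR (length (block be T k)) * eps ^ (3 ^ n) <= 2 * (9 ^ k * th ^ (3 ^ n))).
  { eapply Rle_trans; [apply Rmult_le_compat_r; [exact He | exact Hlen]|].
    rewrite Rmult_plus_distr_r, Rmult_assoc, Hmul. nra. }
  assert (Hdepth : th ^ (3 ^ n) <= th ^ T * th ^ k).
  { rewrite <- pow_add. apply pow_antitone; [exact Hth|].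
    apply Nat.lt_le_incl, Nat.pow_gt_lin_r. lia. }
  assert (Hgeo : 9 ^ k * th ^ k <= (/ 2) ^ k).
  { rewrite <- Rpow_mult_distr. apply pow_incr. unfold th in *. lra. }
  assert (0 <= th ^ T) by (apply pow_le; lra).
  assert (0 <= th ^ k) by (apply pow_le; lra).
  assert (9 ^ k * th ^ (3 ^ n) <= th ^ T * (9 ^ k * th ^ k)).
  { replace (th ^ T * (9 ^ k * th ^ k)) with (9 ^ k * (th ^ T * th ^ k)) by ring.
    apply Rmult_le_compat_l; lra. }
  fold th. nra.
Qed.

Lemma blocks_total N : sum_f_R0 (fun k => total_prob eps (block be T k)) N <= 4 * (M * eps) ^ T.
Proof.
  set (q := 2 * (M * eps) ^ T).
  assert (Hq : 0 <= q) by (apply Rmult_le_pos; [lra | apply pow_le; nra]).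
  eapply Rle_trans; [apply (sum_Rle _ (fun k => q * (/ 2) ^ k)); intros; apply block_total|].
  assert (Hgeo : sum_f_R0 (fun k => q * (/ 2) ^ k) N = 2 * q - 2 * q * (/ 2) ^ (S N)).
  { induction N as [|N IH]; simpl; [field|]. rewrite IH. simpl. field. }
  rewrite Hgeo. assert (0 <= (/ 2) ^ (S N)) by (apply pow_le; lra). unfold q in *. nra.
Qed.

End BlockWeights.

Theorem mainTheorem14 (alpha beta : nat -> Z) :
  (forall n, (1 <= n)%nat ->
     (12 * sum_before beta n < alpha n)%Z /\ (alpha n <= beta n)%Z) ->
  (exists l, Un_cv (fun N => sum_f_R0
                      (fun i => ln (IZR (beta (S i))) / 3 ^ (S i)) N) l) ->
  exists eps0, 0 < eps0 /\
    forall eps, 0 < eps -> eps < eps0 ->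
      B_null eps (fun E => ~ bi_sparse alpha beta E).
Proof.
  intros Hscales [l Hl].
  pose proof (beta_pos alpha beta Hscales) as Hpos.
  pose proof (be_nonneg beta Hpos) as Hnonneg.
  set (M := exp (3 * (2 * ln 7 + 4 * Rabs l))).
  assert (HM : 1 <= M).
  { unfold M. rewrite <- exp_0. apply exp_le_compat.
    pose proof (ln_nonneg 7 ltac:(lra)). pose proof (Rabs_pos l). lra. }
  exists (/ (18 * M)). split; [apply Rinv_0_lt_compat; lra|].
  intros eps He He0 delta Hdelta.
  assert (Hsmall : 18 * (M * eps) <= 1).
  { apply Rmult_lt_compat_l with (r := 18 * M) in He0; [|lra].
    rewrite Rinv_r in He0 by lra. lra. }
  (* choose the depth offset [T] so that the whole cover weighs at most [delta] *)
  destruct (pow_lt_1_zero (M * eps) ltac:(rewrite Rabs_pos_eq; nra) (delta / 4)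
              ltac:(lra)) as [T HT].
  specialize (HT T (le_n T)). rewrite Rabs_pos_eq in HT by (apply pow_le; nra).
  apply (cover_of_blocks eps _ (block beta T)).
  - split; nra.
  - intros k; discriminate.
  - intros k c Hc. destruct (block_members beta Hnonneg T k c Hc) as (w & -> & _ & Hw).
    now apply positive_cylinder_wf.
  - intros E HE. apply (not_bi_sparse_covered beta Hnonneg T alpha); [|exact HE].
    exact (alpha_dominates_radius alpha beta Hscales).
  - intros N. eapply Rle_trans; [apply (blocks_total beta Hnonneg T eps M)|]; try lra.
    intros n. apply (witness_count_geometric beta Hpos); [|exact Hl].
    exact (beta_dominates_radius alpha beta Hscales).
Qed.
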